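(* Let $h\in\mathcal{L}[t]$ be such that its Newton polygon $N_h$ has at least two edges, and let $P=(d,e)$ be the first break point of $N_h$ (the break point with least $x$-coordinate). Then: (1) there are $f,g\in\mathcal{L}[t]$ with $\deg_t(f)=d$, $N_f$ consisting of exactly the first edge of $N_h$, and $h=f\cdot g$; (2) there are $f,g\in\mathcal{L}[t]$ with $\deg_t(f)=d$, $N_f$ consisting of exactly the first edge of $N_h$, and $h=g\cdot f$.
   Context: $(\mathcal{L},v)$ is a complete discretely valued skew field (division ring with $v:\mathcal{L}\to\mathbb{Z}\cup\{\infty\}$, $v(x)=\infty\iff x=0$, $v(x+y)\ge\min\{v(x),v(y)\}$, $v(xy)=v(x)+v(y)$, such that every series $\sum x_i$ with $v(x_i)\to\infty$ converges). $\mathcal{L}[t]$ is the polynomial ring in a central indeterminate $t$. The Newton polygon $N_f$ of $f=\sum a_it^i$ is the lower convex hull of the points $(i,v(a_i))$ with $a_i\ne0$; a break point is a vertex where two edges meet; an edge from $(i,w_i)$ to $(j,w_j)$ has length $|j-i|$ and slope $(w_j-w_i)/(j-i)$. *)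

From HB Require Import structures.
From mathcomp Require Import all_boot all_order all_algebra.
Set Implicit Arguments. Unset Strict Implicit. Unset Printing Implicit Defensive.
Import Order.TTheory GRing.Theory Num.Theory.
Local Open Scope ring_scope.

Definition skew_field (L : unitRingType) : Prop :=
  forall x : L, x != 0 -> x \is a GRing.unit.

(* Discrete valuation v : L -> Z ∪ {oo}; we record v only on nonzero elements
   (v 0 = oo is implicit: the value v 0 is never used). *)
Definition discrete_valuation (L : unitRingType) (v : L -> int) : Prop :=
  (forall x y : L, x != 0 -> y != 0 -> v (x * y) = v x + v y) /\
  (forall x y : L, x != 0 -> y != 0 -> x + y != 0 ->
      Num.min (v x) (v y) <= v (x + y)).

(* v(x_i) -> oo, where v 0 = oo *)
Definition val_to_oo (L : unitRingType) (v : L -> int) (x : nat -> L) : Prop :=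
  forall N : int, exists n0 : nat, forall n : nat, (n0 <= n)%N ->
    x n = 0 \/ N <= v (x n).

Definition val_cvg (L : unitRingType) (v : L -> int) (u : nat -> L) (l : L) : Prop :=
  val_to_oo v (fun n => u n - l).

Definition val_complete (L : unitRingType) (v : L -> int) : Prop :=
  forall x : nat -> L, val_to_oo v x ->
    exists l : L, val_cvg v (fun n => \sum_(i < n) x i) l.

Definition complete_dv_skew_field (L : unitRingType) (v : L -> int) : Prop :=
  [/\ skew_field L, discrete_valuation v & val_complete v].

(* Convex hull of the points (i, v(a_i)), a_i != 0, for f = sum a_i t^i. *)
Definition newton_hull (L : unitRingType) (v : L -> int) (f : {poly L})
    (p : rat * rat) : Prop :=
  exists c : nat -> rat,
    [/\ forall i, 0 <= c i,
        forall i, f`_i = 0 -> c i = 0,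
        \sum_(i < size f) c i = 1,
        p.1 = \sum_(i < size f) c i * i%:R
      & p.2 = \sum_(i < size f) c i * (v f`_i)%:~R].

(* The Newton polygon N_f: the lower convex hull, i.e. the points of the
   convex hull that are lowest on their vertical line. *)
Definition newton_polygon (L : unitRingType) (v : L -> int) (f : {poly L})
    (p : rat * rat) : Prop :=
  newton_hull v f p /\
  forall q, newton_hull v f q -> q.1 = p.1 -> p.2 <= q.2.

(* A break point: a point of N_f with points of N_f strictly on its left and
   on its right (two edges meet there) which is a vertex, i.e. does not lie in
   the relative interior of a segment joining two points of N_f. *)
Definition break_point (L : unitRingType) (v : L -> int) (f : {poly L})
    (p : rat * rat) : Prop :=
  [/\ newton_polygon v f p,
      exists q, newton_polygon v f q /\ q.1 < p.1,
      exists q, newton_polygon v f q /\ p.1 < q.1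
    & ~ exists q1 q2 (lam : rat),
          [/\ newton_polygon v f q1, newton_polygon v f q2,
              q1.1 < p.1 < q2.1, 0 < lam < 1
            & p = (lam * q1.1 + (1 - lam) * q2.1, lam * q1.2 + (1 - lam) * q2.2)]].

(* The first edge of N_h starts at its leftmost vertex (i0, v h_i0) and ends at
   (d, v h_d); its slope N / D is the least slope of a line through
   (i0, v h_i0) and another point.  Give the monomial a t^i the weight
   D v(a) - N i: every monomial of h weighs at least as much as the edge, with
   equality on the edge and strict inequality beyond d.  After scaling by
   h_d^-1, h = (H + K) h_d with H monic of degree d and K strictly heavier.
   Dividing repeatedly by H, K - G_k F_k = G_(k+1) H + F_(k+1) converges, by
   completeness, to H + K = (1 + G) (H + F) with G and F heavier than 1 and H;
   then f = (H + F) h_d keeps the coefficients of h on the edge and has nothing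
   below it, so N_f is the first edge of N_h.  The factorization with f on the
   left is the same argument in the opposite ring L^c. *)

From mathcomp Require Import all_boot all_order all_algebra.
From mathcomp Require Import zify ring lra.
From Stdlib Require Import ClassicalEpsilon.
Import Order.TTheory GRing.Theory Num.Theory.
Local Open Scope ring_scope.
Set Implicit Arguments. Unset Strict Implicit. Unset Printing Implicit Defensive.

(** * Valuations along a slope *)

Section Valuation.
Variables (L : unitRingType) (v : L -> int).
Hypothesis Hv : discrete_valuation v.

Lemma valuationM x y : x != 0 -> y != 0 -> v (x * y) = v x + v y.
Proof. exact: Hv.1. Qed.

Lemma valuation1 : v 1 = 0.
Proof.
have := valuationM (oner_neq0 L) (oner_neq0 L); rewrite mulr1 => /eqP.
by rewrite -subr_eq0 opprD addrA subrr sub0r oppr_eq0 => /eqP.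
Qed.

Lemma valuationN x : x != 0 -> v (- x) = v x.
Proof.
move=> x0; have m10 : (-1 : L) != 0 by rewrite oppr_eq0 oner_neq0.
have := valuationM m10 m10; rewrite mulrNN mulr1 valuation1 => vm1.
by rewrite -mulN1r valuationM // (_ : v (-1) = 0) ?add0r //; lia.
Qed.

Lemma valuationV x : x \is a GRing.unit -> v x^-1 = - v x.
Proof.
move=> ux; have x0 : x != 0 by apply: contraTneq ux => ->; rewrite unitr0.
have := valuationM x0 (invr_neq0 x0); rewrite mulrV // valuation1.
by lia.
Qed.

Variable D : int.
Hypothesis HD : 0 < D.

Definition sval_ge (m : int) (x : L) := x = 0 \/ m <= D * v x.

Lemma sval_ge0 m : sval_ge m 0. Proof. by left. Qed.

Lemma sval_ge_val x : sval_ge (D * v x) x. Proof. by right. Qed.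

Lemma sval_geW m m' x : m' <= m -> sval_ge m x -> sval_ge m' x.
Proof. by move=> le [->|h]; [left|right; apply: le_trans h]. Qed.

Lemma sval_geN m x : sval_ge m x -> sval_ge m (- x).
Proof.
case: (eqVneq x 0) => [->|x0]; first by rewrite oppr0.
by case=> [->|h]; [rewrite oppr0; left | right; rewrite valuationN].
Qed.

Lemma sval_geD m x y : sval_ge m x -> sval_ge m y -> sval_ge m (x + y).
Proof.
case: (eqVneq x 0) => [-> _|x0]; first by rewrite add0r.
case: (eqVneq y 0) => [-> ?|y0]; first by rewrite addr0.
case: (eqVneq (x + y) 0) => [-> _ _|s0]; first by left.
case=> [/eqP|hx]; first by rewrite (negbTE x0).
case=> [/eqP|hy]; first by rewrite (negbTE y0).
right; have := Hv.2 x y x0 y0 s0; rewrite ge_min => /orP[] h.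
  by apply: le_trans hx _; rewrite ler_pM2l.
by apply: le_trans hy _; rewrite ler_pM2l.
Qed.

Lemma sval_ge_sum m I (r : seq I) (P : pred I) (F : I -> L) :
  (forall i, P i -> sval_ge m (F i)) -> sval_ge m (\sum_(i <- r | P i) F i).
Proof. by move=> h; elim/big_ind: _ => //; [exact: sval_ge0 | exact: sval_geD]. Qed.

Lemma sval_geM a b x y : sval_ge a x -> sval_ge b y -> sval_ge (a + b) (x * y).
Proof.
case: (eqVneq x 0) => [-> _ _|x0]; first by rewrite mul0r; left.
case: (eqVneq y 0) => [-> _ _|y0]; first by rewrite mulr0; left.
case=> [/eqP|hx]; first by rewrite (negbTE x0).
case=> [/eqP|hy]; first by rewrite (negbTE y0).
by right; rewrite valuationM // mulrDr lerD.
Qed.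

Lemma sval_addr_dominated x y :
  x != 0 -> sval_ge (D * v x + 1) y -> x + y != 0 /\ v (x + y) = v x.
Proof.
move=> x0; case: (eqVneq y 0) => [-> _|y0]; first by rewrite addr0.
case=> [/eqP|hy]; first by rewrite (negbTE y0).
have lt : v x < v y by rewrite -(ltr_pM2l HD); apply: lt_le_trans hy; rewrite ltrDl.
have s0 : x + y != 0.
  apply: contraTneq lt => /eqP; rewrite addr_eq0 => /eqP ->.
  by rewrite valuationN ?ltxx.
split=> //; have xE : x = (x + y) + - y by rewrite addrK.
have ny0 : - y != 0 by rewrite oppr_eq0.
have := Hv.2 _ _ s0 ny0; rewrite -xE => /(_ x0); rewrite valuationN // ge_min.
case/orP=> [le1|]; last by rewrite leNgt lt.
have := Hv.2 _ _ x0 y0 s0; rewrite ge_min => /orP[le2|le2].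
  by apply/eqP; rewrite eq_le le1 le2.
by move: lt; rewrite ltNge (le_trans le2 le1).
Qed.

End Valuation.

Section WeightedValuation.
Variables (L : unitRingType) (v : L -> int).
Hypothesis Hv : discrete_valuation v.
Variables (D N : int).
Hypothesis HD : 0 < D.

Definition weight (p : {poly L}) (i : nat) := D * v p`_i - N * i%:Z.

Definition wval_ge (k : int) (p : {poly L}) :=
  forall i : nat, sval_ge v D (k + N * i%:Z) p`_i.

Lemma wval_geP k p : wval_ge k p <-> forall i, p`_i != 0 -> k <= weight p i.
Proof.
rewrite /weight; split=> [wp i pi0|wp i].
  by case: (wp i) => [/eqP|]; [rewrite (negbTE pi0) | rewrite -lerBrDr].
by have [->|/wp] := eqVneq p`_i 0; [left | right; rewrite -lerBrDr].
Qed.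

Lemma wval_ge0 k : wval_ge k 0.
Proof. by move=> i; rewrite coef0; apply: sval_ge0. Qed.

Lemma wval_geW k k' p : k' <= k -> wval_ge k p -> wval_ge k' p.
Proof. by move=> le h i; apply: sval_geW (h i); rewrite lerD2r. Qed.

Lemma wval_geD k p q : wval_ge k p -> wval_ge k q -> wval_ge k (p + q).
Proof. by move=> hp hq i; rewrite coefD; apply: (sval_geD Hv HD). Qed.

Lemma wval_geN k p : wval_ge k p -> wval_ge k (- p).
Proof. by move=> hp i; rewrite coefN; apply: (sval_geN Hv). Qed.

Lemma wval_geB k p q : wval_ge k p -> wval_ge k q -> wval_ge k (p - q).
Proof. by move=> hp hq; apply: wval_geD => //; apply: wval_geN. Qed.

Lemma wval_geM a b p q : wval_ge a p -> wval_ge b q -> wval_ge (a + b) (p * q).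
Proof.
move=> hp hq i; rewrite coefM; apply: (sval_ge_sum Hv HD) => -[j /= lt_ji] _.
apply: sval_geW (sval_geM Hv (hp j) (hq (i - j)%N)).
rewrite -subzn -1?ltnS // (_ : a + N * j%:Z + (b + N * (i%:Z - j%:Z)) = a + b + N * i%:Z) //.
by ring.
Qed.

Lemma wval_ge_eq0 p : (forall k, wval_ge k p) -> p = 0.
Proof.
move=> h; apply/polyP => i; rewrite coef0.
case: (h (D * v p`_i - N * i%:Z + 1) i) => //.
by rewrite addrAC subrK gerDl ler10.
Qed.

Lemma wval_geCXn k c n : sval_ge v D (k + N * n%:Z) c -> wval_ge k (c%:P * 'X^n).
Proof.
move=> hc i; rewrite coefCM coefXn.
by case: (eqVneq i n) => [->|_]; rewrite ?mulr1 // mulr0; apply: sval_ge0.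
Qed.

End WeightedValuation.

(** * Hensel factorization *)

Lemma size_quot_monic (R : nzRingType) (H q r T : {poly R}) d :
  H \is monic -> size H = d.+1 -> T = q * H + r -> (size r <= d)%N ->
  (size q <= size T - d)%N.
Proof.
move=> Hm sH ET sr; case: (eqVneq q 0) => [->|q0]; first by rewrite size_poly0.
have sqH : size (q * H) = (size q + d)%N by rewrite size_Mmonic // sH addnS.
suff -> : size T = (size q + d)%N by rewrite addnK.
rewrite ET size_polyDl sqH //; apply: leq_ltn_trans sr _.
by rewrite -{1}(add0n d) ltn_add2r size_poly_gt0.
Qed.

Section MonicDivision.
Variables (L : unitRingType) (v : L -> int).
Hypothesis Hv : discrete_valuation v.
Variables (D N : int).
Hypothesis HD : 0 < D.
Variables (H : {poly L}) (d : nat).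
Hypothesis Hmon : H \is monic.
Hypothesis Hsize : size H = d.+1.
Hypothesis HwH : wval_ge v D N (- (N * d%:Z)) H.

Local Notation wval_ge := (wval_ge v D N).

(* Division by a monic [H] whose leading monomial has minimal weight loses no
   weight: peel off the leading monomial of the quotient one at a time. *)
Lemma wval_ge_divmod (q r T : {poly L}) (m : int) :
  T = q * H + r -> (size r <= d)%N -> wval_ge (- (N * d%:Z) + m) T ->
  wval_ge m q /\ wval_ge (- (N * d%:Z) + m) r.
Proof.
move: {2}(size q) (leqnn (size q)) => n; elim: n q T => [|n IH] q T sq ET sr wT.
  move: sq; rewrite leqn0 size_poly_eq0 => /eqP q0.
  by move: wT; rewrite ET q0 mul0r add0r; split=> //; apply: wval_ge0.
have [q0|qn0] := eqVneq q 0.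
  by move: wT; rewrite ET q0 mul0r add0r; split=> //; apply: wval_ge0.
set k := (size q).-1; set c := lead_coef q.
have sqk : size q = k.+1 by rewrite /k prednK // size_poly_gt0.
have Tc : T`_(k + d) = c.
  rewrite ET coefD [r`_(k + d)]nth_default ?(leq_trans sr (leq_addl _ _)) // addr0.
  by rewrite /c -(lead_coef_Mmonic q Hmon) /lead_coef size_Mmonic // Hsize sqk addSn addnS.
set M := c%:P * 'X^k.
have wM : wval_ge m M.
  apply: wval_geCXn; have := wT (k + d)%N; rewrite Tc; apply: sval_geW.
  by rewrite PoszD (_ : _ + _ + _ = m + N * k%:Z) //; ring.
have sqM : (size (q - M)%R <= n)%N.
  rewrite -ltnS (leq_trans _ sq) // sqk ltnS; apply/leq_sizeP => j.
  rewrite leq_eqVlt => /orP[/eqP <-|kj]; rewrite coefB coefCM coefXn.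
    by rewrite eqxx mulr1 /c /lead_coef -/k subrr.
  by rewrite (gtn_eqF kj) mulr0 subr0 nth_default // sqk.
have ETM : T - M * H = (q - M) * H + r by rewrite ET mulrBl addrAC.
have wMH : wval_ge (- (N * d%:Z) + m) (M * H) by rewrite addrC; apply: wval_geM.
have [wqM wr] := IH _ _ sqM ETM sr (wval_geB Hv HD wT wMH).
by split=> //; rewrite -(subrK M q); apply: wval_geD.
Qed.

End MonicDivision.

Lemma eventually_forall_ltn (P : nat -> nat -> Prop) B :
  (forall i, (i < B)%N -> exists k0, forall k, (k0 <= k)%N -> P i k) ->
  exists k0, forall k, (k0 <= k)%N -> forall i, (i < B)%N -> P i k.
Proof.
elim: B => [|B IH] h; first by exists 0%N.
have [k1 h1] := IH (fun i lt_iB => h i (ltnW lt_iB)).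
have [k2 h2] := h B (ltnSn B).
exists (maxn k1 k2) => k; rewrite geq_max => /andP[k1k k2k] i.
by rewrite ltnS leq_eqVlt => /orP[/eqP ->|]; [apply: h2 | apply: h1].
Qed.

Section WeightedLimit.
Variables (L : unitRingType) (v : L -> int).
Hypothesis Hv : discrete_valuation v.
Hypothesis Hc : val_complete v.
Variables (D N : int).
Hypothesis HD : 0 < D.

Local Notation wval_ge := (wval_ge v D N).

Definition wval_cauchy (P : nat -> {poly L}) :=
  forall M, exists k0, forall k, (k0 <= k)%N -> wval_ge M (P k.+1 - P k).

Definition wval_cvg (P : nat -> {poly L}) (Q : {poly L}) :=
  forall M, exists k0, forall k, (k0 <= k)%N -> wval_ge M (P k - Q).

Lemma wval_ge_cvg (P : nat -> {poly L}) Q m :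
  (forall k, wval_ge m (P k)) -> wval_cvg P Q -> wval_ge m Q.
Proof.
move=> wP /(_ m) [k0 hk0]; rewrite -(subKr (P k0) Q).
exact: (wval_geB Hv HD (wP k0) (hk0 k0 (leqnn k0))).
Qed.

Lemma coef_cauchy_cvg (P : nat -> {poly L}) i : wval_cauchy P ->
  exists l, val_cvg v (fun n => \sum_(j < n) (P j.+1 - P j)`_i) l.
Proof.
move=> cP; apply: (Hc (x := fun j => (P j.+1 - P j)`_i)) => M.
have [k0 hk0] := cP (D * M - N * i%:Z).
exists k0 => k /hk0 /(_ i); rewrite subrK => -[->|le]; [by left | right].
by rewrite -(ler_pM2l HD).
Qed.

Lemma wval_cauchy_cvg (P : nat -> {poly L}) B :
  (forall k, (size (P k) <= B)%N) -> wval_cauchy P ->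
  exists2 Q : {poly L}, (size Q <= B)%N & wval_cvg P Q.
Proof.
move=> sP cP.
have [l hl] : exists l : nat -> L,
    forall i, val_cvg v (fun n => \sum_(j < n) (P j.+1 - P j)`_i) (l i).
  exists (fun i => proj1_sig (constructive_indefinite_description _ (coef_cauchy_cvg i cP))).
  by move=> i; case: constructive_indefinite_description.
have sQ : (size (P 0%N + \poly_(i < B) l i)%R <= B)%N.
  by rewrite (leq_trans (size_polyD _ _)) // geq_max sP size_poly.
exists (P 0%N + \poly_(i < B) l i) => //.
move=> M; have [k0 hk0] : exists k0, forall k, (k0 <= k)%N -> forall i, (i < B)%N ->
    sval_ge v D (M + N * i%:Z) (P k - (P 0%N + \poly_(i < B) l i))`_i.
  apply: eventually_forall_ltn => i lt_iB.
  have [k0 hk0] := hl i `|M + N * i%:Z|.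
  exists k0 => k /hk0.
  rewrite -coef_sum -(big_mkord xpredT (fun j => P j.+1 - P j)) telescope_sumr //.
  rewrite !coefB coefD coef_poly lt_iB opprD addrA => -[->|le]; [by left | right].
  apply: le_trans (ler_norm _) (le_trans le _).
  by rewrite ler_peMl ?(le_trans (normr_ge0 _) le) //; lia.
exists k0 => k lek i; have [lt_iB|le_Bi] := ltnP i B; first exact: hk0.
left; rewrite nth_default // (leq_trans _ le_Bi) //.
by rewrite (leq_trans (size_polyD _ _)) // size_polyN geq_max sP sQ.
Qed.

End WeightedLimit.

Section HenselLift.
Variables (L : unitRingType) (v : L -> int).
Hypothesis Hv : discrete_valuation v.
Hypothesis Hc : val_complete v.
Variables (D N : int).
Hypothesis HD : 0 < D.
Variables (H K : {poly L}) (d n : nat).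
Hypothesis Hmon : H \is monic.
Hypothesis Hsize : size H = d.+1.
Hypothesis HwH : wval_ge v D N (- (N * d%:Z)) H.
Hypothesis HwK : wval_ge v D N (- (N * d%:Z) + 1) K.
Hypothesis HsK : (size K <= n.+1)%N.
Hypothesis Hdn : (d <= n)%N.

Local Notation C := (- (N * d%:Z)).
Local Notation wval_ge := (wval_ge v D N).

(* We look for [H + K = (1 + G) (H + F)], i.e. [K - G F = G H + F], as the
   limit of [K - G_k F_k = G_(k+1) H + F_(k+1)] (division by [H]). *)
Definition hensel_step (s : {poly L} * {poly L}) :=
  let T := K - s.1 * s.2 in (Pdiv.Ring.rdivp T H, Pdiv.Ring.rmodp T H).

Definition hensel_seq k := iter k hensel_step (0, 0).

Local Notation G k := (hensel_seq k).1.
Local Notation F k := (hensel_seq k).2.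

Lemma hensel_seqE k : K - G k * F k = G k.+1 * H + F k.+1.
Proof. exact: Pdiv.RingMonic.rdivp_eq. Qed.

Lemma size_hensel_rem k : (size (F k) <= d)%N.
Proof.
case: k => [|k]; first by rewrite size_poly0.
by rewrite -ltnS -Hsize Pdiv.Ring.ltn_rmodpN0 // -size_poly_gt0 Hsize.
Qed.

Lemma size_hensel_quo k : (size (G k) <= n.+1 - d)%N.
Proof.
elim: k => [|k IH]; first by rewrite size_poly0.
apply: leq_trans (size_quot_monic Hmon Hsize (hensel_seqE k) (size_hensel_rem _)) _.
rewrite leq_sub2r // (leq_trans (size_polyD _ _)) // size_polyN geq_max HsK.
apply: leq_trans (size_polyMleq _ _) _.
apply: leq_trans (leq_pred _) _; apply: leq_trans (leq_add IH (size_hensel_rem k)) _.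
by rewrite subnK // leqW.
Qed.

Lemma wval_hensel k : wval_ge 1 (G k) /\ wval_ge (C + 1) (F k).
Proof.
elim: k => [|k [wG wF]]; first by split; apply: wval_ge0.
apply: (wval_ge_divmod Hv HD Hmon Hsize HwH (hensel_seqE k) (size_hensel_rem _)).
apply: (wval_geB Hv HD) => //; apply: wval_geW _ (wval_geM Hv HD wG wF); lia.
Qed.

Lemma wval_hensel_diff k :
  wval_ge k.+1 (G k.+1 - G k) /\ wval_ge (C + k.+1) (F k.+1 - F k).
Proof.
elim: k => [|k [wdG wdF]]; first by rewrite !subr0; apply: wval_hensel.
have E : (K - G k.+1 * F k.+1) - (K - G k * F k) =
    (G k.+2 - G k.+1) * H + (F k.+2 - F k.+1).
  by rewrite !hensel_seqE mulrBl opprD addrACA.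
have E' : (K - G k.+1 * F k.+1) - (K - G k * F k) =
    - ((G k.+1 - G k) * F k.+1 + G k * (F k.+1 - F k)).
  by rewrite mulrBl mulrBr addrA subrK opprB opprB addrC subrKA.
have [_ wF1] := wval_hensel k.+1; have [wG0 _] := wval_hensel k.
apply: (wval_ge_divmod Hv HD Hmon Hsize HwH E).
  by rewrite (leq_trans (size_polyD _ _)) // size_polyN geq_max !size_hensel_rem.
rewrite E'; apply/(wval_geN Hv)/(wval_geD Hv HD).
  by apply: wval_geW _ (wval_geM Hv HD wdG wF1); lia.
by apply: wval_geW _ (wval_geM Hv HD wG0 wdF); lia.
Qed.

Lemma hensel_limit_eq Gl Fl : wval_cvg v D N (fun k => G k) Gl ->
  wval_cvg v D N (fun k => F k) Fl -> wval_ge 1 Gl ->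
  K = Fl + Gl * H + Gl * Fl.
Proof.
move=> cG cF wGl; apply/eqP; rewrite -subr_eq0; apply/eqP/wval_ge_eq0 => M.
pose M' := Num.max M (M - C).
have [k1 hk1] := cG M'; have [k2 hk2] := cF M'.
pose k := maxn k1 k2; have [lek1 lek2] : (k1 <= k /\ k2 <= k)%N by rewrite !leq_maxl leq_maxr.
have [_ wFk] := wval_hensel k.
have -> : K - (Fl + Gl * H + Gl * Fl) =
    (F k.+1 - Fl) + ((G k.+1 - Gl) * H + ((G k - Gl) * F k + Gl * (F k - Fl))).
  rewrite mulrBr !mulrBl subrKA addrA [_ - Fl + _]addrACA -opprD addrACA -opprD.
  by rewrite -(subrK (G k * F k) K) hensel_seqE [G k.+1 * H + _]addrC.
have [leM leMC] : M <= M' /\ M <= M' + C by rewrite /M' !le_max lexx; lia.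
apply: (wval_geD Hv HD); first exact: wval_geW _ (hk2 _ (leqW lek2)).
apply: (wval_geD Hv HD); first exact: wval_geW _ (wval_geM Hv HD (hk1 _ (leqW lek1)) HwH).
apply: (wval_geD Hv HD).
  by apply: wval_geW _ (wval_geM Hv HD (hk1 _ lek1) wFk); lia.
by apply: wval_geW _ (wval_geM Hv HD wGl (hk2 _ lek2)); lia.
Qed.

Lemma hensel_lift : exists G F : {poly L},
  [/\ H + K = (1 + G) * (H + F), (size F <= d)%N, wval_ge 1 G & wval_ge (C + 1) F].
Proof.
have [Gl _ cG] : exists2 Gl : {poly L},
    (size Gl <= n.+1 - d)%N & wval_cvg v D N (fun k => G k) Gl.
  apply: (wval_cauchy_cvg Hc HD size_hensel_quo) => M.
  by exists `|M|%N => k lek; apply: wval_geW _ (wval_hensel_diff k).1; lia.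
have [Fl sF cF] : exists2 Fl : {poly L},
    (size Fl <= d)%N & wval_cvg v D N (fun k => F k) Fl.
  apply: (wval_cauchy_cvg Hc HD size_hensel_rem) => M.
  by exists `|M - C|%N => k lek; apply: wval_geW _ (wval_hensel_diff k).2; lia.
have wG : wval_ge 1 Gl by apply: (wval_ge_cvg Hv HD _ cG) => k; case: (wval_hensel k).
have wF : wval_ge (C + 1) Fl by apply: (wval_ge_cvg Hv HD _ cF) => k; case: (wval_hensel k).
exists Gl, Fl; split=> //.
by rewrite (hensel_limit_eq cG cF wG) mulrDl mul1r mulrDr !addrA.
Qed.

End HenselLift.

Lemma coef_mul_eq0_prefix (L : unitRingType) (g f : {poly L}) j :
  g`_0 \is a GRing.unit -> (forall k, (k <= j)%N -> (g * f)`_k = 0) ->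
  forall k, (k <= j)%N -> f`_k = 0.
Proof.
move=> ug; elim: j => [|j IH] gf0 k.
  by rewrite leqn0 => /eqP ->; apply: (mulrI ug); rewrite mulr0 -coef0M gf0.
rewrite leq_eqVlt ltnS => /orP[/eqP ->|]; last by apply: IH => i /leqW; apply: gf0.
apply: (mulrI ug); rewrite mulr0 -[RHS](gf0 j.+1) // coefM big_ord_recl subn0 big1 ?addr0 //.
move=> [i lt_ij] _; rewrite IH ?mulr0 //; first by move=> m /leqW; apply: gf0.
by rewrite /= /bump /= subSS leq_subr.
Qed.

(* [f] is a factor of [h] carrying the edge of slope [N / D] of the Newton
   polygon of [h] that ends at [(d, v h_d)]. *)
Definition edge_factor (L : unitRingType) (v : L -> int) (D N : int) (h : {poly L})
    (d : nat) (f : {poly L}) :=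
  [/\ size f = d.+1,
      forall i, f`_i != 0 -> weight v D N h d <= weight v D N f i,
      forall i, (i <= d)%N -> h`_i != 0 -> weight v D N h i = weight v D N h d ->
        f`_i != 0 /\ v f`_i = v h`_i
    & forall j, (forall k, (k <= j)%N -> h`_k = 0) -> f`_j = 0].

Section EdgeFactor.
Variables (L : unitRingType) (v : L -> int).
Hypothesis Hv : discrete_valuation v.
Hypothesis HS : skew_field L.
Hypothesis Hc : val_complete v.
Variables (D N : int).
Hypothesis HD : 0 < D.
Variables (h : {poly L}) (d : nat).
Hypothesis hd0 : h`_d != 0.
Hypothesis Hline : forall i, h`_i != 0 -> weight v D N h d <= weight v D N h i.
Hypothesis Hstrict :
  forall i, (d < i)%N -> h`_i != 0 -> weight v D N h d < weight v D N h i.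

Local Notation a := h`_d.
Local Notation C := (- (N * d%:Z)).
Local Notation wval_ge := (wval_ge v D N).

Let ua : a \is a GRing.unit := HS hd0.

Let hnorm := h * (a^-1)%:P.
Let hlow := \poly_(i < d.+1) hnorm`_i.
Let hhigh := hnorm - hlow.

Lemma coef_hnorm_eq0 i : (hnorm`_i == 0) = (h`_i == 0).
Proof. by rewrite coefMC mulIr_eq0 //; apply: mulIr; rewrite unitrV. Qed.

Lemma weight_hnorm i : h`_i != 0 ->
  weight v D N hnorm i = weight v D N h i - weight v D N h d + C.
Proof.
move=> hi0; rewrite /weight coefMC valuationM ?invr_eq0 // valuationV //.
by ring.
Qed.

Lemma size_hlow : size hlow = d.+1.
Proof. by rewrite size_poly_eq // coef_hnorm_eq0. Qed.

Lemma hlow_monic : hlow \is monic.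
Proof. by rewrite monicE /lead_coef size_hlow coef_poly ltnSn coefMC mulrV. Qed.

Lemma wval_hlow : wval_ge C hlow.
Proof.
apply/wval_geP => i; rewrite /weight coef_poly; case: ltnP => _; last by rewrite eqxx.
rewrite coef_hnorm_eq0 => hi0; rewrite -/(weight v D N hnorm i) weight_hnorm //.
by rewrite -[X in X <= _]add0r lerD2r subr_ge0 Hline.
Qed.

Lemma coef_hhigh i : hhigh`_i = if (i <= d)%N then 0 else hnorm`_i.
Proof. by rewrite coefB coef_poly ltnS; case: leqP; rewrite ?subrr ?subr0. Qed.

Lemma wval_hhigh : wval_ge (C + 1) hhigh.
Proof.
apply/wval_geP => i; rewrite /weight coef_hhigh; case: leqP => [_|lt_di]; first by rewrite eqxx.
rewrite coef_hnorm_eq0 => hi0; rewrite -/(weight v D N hnorm i) weight_hnorm // addrC lerD2r.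
by rewrite -ltzD1 -[X in X < _]add0r ltrD2r subr_gt0 Hstrict.
Qed.

Lemma size_hhigh : (size hhigh <= size h)%N.
Proof.
apply/leq_sizeP => j le_hj; rewrite coef_hhigh coefMC nth_default // mul0r.
by case: leqP.
Qed.

Lemma h_splitE : h = (hlow + hhigh) * a%:P.
Proof. by rewrite addrC subrK -mulrA -polyCM mulVr // mulr1. Qed.

Lemma sval_ge_edge i (F : {poly L}) : wval_ge (C + 1) F ->
  sval_ge v D (weight v D N h d + 1 + N * i%:Z) (F`_i * a).
Proof.
move=> wF; apply: sval_geW _ (sval_geM Hv (wF i) (sval_ge_val v D a)).
by rewrite /weight le_eqVlt; apply/orP; left; apply/eqP; ring.
Qed.

Lemma edge_factor_left : exists g f : {poly L}, h = g * f /\ edge_factor v D N h d f.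
Proof.
have lt_dh : (d < size h)%N by rewrite ltnNge; apply: contra hd0 => /leq_sizeP ->.
have le_dn : (d <= (size h).-1)%N by rewrite -ltnS prednK // (leq_ltn_trans _ lt_dh).
have [G [F [HKE sF wG wF]]] := hensel_lift Hv Hc HD hlow_monic size_hlow wval_hlow
  wval_hhigh (leq_trans size_hhigh (leqSpred _)) le_dn.
set f := (hlow + F) * a%:P.
have coef_f i : f`_i = if (i <= d)%N then h`_i + F`_i * a else 0.
  rewrite /f coefMC coefD coef_poly ltnS mulrDl; case: leqP => [_|lt_di].
    by rewrite coefMC -mulrA mulVr // mulr1.
  by rewrite mul0r add0r nth_default ?mul0r // (leq_trans sF (ltnW lt_di)).
have hE : h = (1 + G) * f by rewrite h_splitE HKE mulrA.
exists (1 + G), f; split=> //; split.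
- apply/eqP; rewrite eqn_leq; apply/andP; split.
    by apply/leq_sizeP => j lt_dj; rewrite coef_f leqNgt lt_dj.
  rewrite ltnNge; apply/negP => /leq_sizeP /(_ d (leqnn d)) /eqP.
  by rewrite coef_f leqnn [F`_d]nth_default ?mul0r ?addr0 //; apply/negP.
- move=> i; rewrite {2}/weight coef_f; case: leqP => _ fi0; last by rewrite eqxx in fi0.
  suff : sval_ge v D (weight v D N h d + N * i%:Z) (h`_i + F`_i * a).
    by case=> [e|]; [rewrite e eqxx in fi0 | rewrite lerBrDr].
  apply: (sval_geD Hv HD); last by apply: sval_geW _ (sval_ge_edge i wF); rewrite lerD2r lerDl.
  have [->|hi0] := eqVneq h`_i 0; [by left | right].
  by move: (Hline hi0); rewrite {2}/weight lerBrDr.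
- move=> i le_id hi0 eqw; rewrite coef_f le_id.
  apply: (sval_addr_dominated Hv HD hi0); apply: sval_geW _ (sval_ge_edge i wF).
  by rewrite -eqw /weight addrAC subrK.
- move=> j hj0; have g0 : (1 + G)`_0 \is a GRing.unit.
    have wG0 : sval_ge v D (D * v 1 + 1) G`_0.
      by apply: sval_geW _ (wG 0%N); rewrite valuation1 // mulr0 add0r mulr0 addr0.
    apply: HS; rewrite coefD coef1 eqxx.
    by case: (sval_addr_dominated Hv HD (oner_neq0 L) wG0).
  by apply: (coef_mul_eq0_prefix g0) (leqnn j) => k /hj0; rewrite -hE.
Qed.

End EdgeFactor.

Section OppositeRing.
Variable L : unitRingType.

Definition to_conv_poly (p : {poly L}) : {poly L^c} := \poly_(i < size p) (p`_i : L^c).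
Definition of_conv_poly (p : {poly L^c}) : {poly L} := \poly_(i < size p) (p`_i : L).

Lemma coef_to_conv_poly p i : (to_conv_poly p)`_i = p`_i.
Proof. by rewrite coef_poly; case: ltnP => // le_pi; rewrite nth_default. Qed.

Lemma coef_of_conv_poly p i : (of_conv_poly p)`_i = p`_i.
Proof. by rewrite coef_poly; case: ltnP => // le_pi; rewrite nth_default. Qed.

Lemma to_conv_polyK : cancel to_conv_poly of_conv_poly.
Proof. by move=> p; apply/polyP => i; rewrite coef_of_conv_poly coef_to_conv_poly. Qed.

Lemma of_conv_polyM p q : of_conv_poly (p * q) = of_conv_poly q * of_conv_poly p.
Proof.
apply/polyP => i; rewrite coef_of_conv_poly coefM coefMr.
by apply: eq_bigr => j _; rewrite !coef_of_conv_poly.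
Qed.

Lemma size_of_conv_poly p : size (of_conv_poly p) = size p.
Proof.
apply/eqP; rewrite eqn_leq size_poly /=; case: (posnP (size p)) => [->//|sp].
rewrite -(prednK sp) ltnNge; apply/negP => /leq_sizeP /(_ _ (leqnn _)).
rewrite coef_of_conv_poly => /eqP; have := lead_coef_eq0 p; rewrite /lead_coef => ->.
by move/eqP => p0; move: sp; rewrite p0 size_poly0.
Qed.

Variable v : L -> int.

Lemma complete_dv_skew_field_conv :
  complete_dv_skew_field v -> complete_dv_skew_field (L := L^c) v.
Proof.
by case=> HS [vM vD] Hc; split=> //; split=> // x y x0 y0; rewrite addrC; apply: vM.
Qed.

Lemma weight_to_conv_poly D N p i :
  weight (L := L^c) v D N (to_conv_poly p) i = weight v D N p i.
Proof. by rewrite /weight coef_to_conv_poly. Qed.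

End OppositeRing.

Lemma edge_factor_right (L : unitRingType) (v : L -> int)
    (HL : complete_dv_skew_field v) (D N : int) (HD : 0 < D) (h : {poly L}) (d : nat) :
  h`_d != 0 -> (forall i, h`_i != 0 -> weight v D N h d <= weight v D N h i) ->
  (forall i, (d < i)%N -> h`_i != 0 -> weight v D N h d < weight v D N h i) ->
  exists g f : {poly L}, h = f * g /\ edge_factor v D N h d f.
Proof.
move=> hd0 Hline Hstrict; have [HS Hv Hc] := complete_dv_skew_field_conv HL.
have [g [f [hE [sf wf onf lowf]]]] : exists g f : {poly L^c},
    to_conv_poly h = g * f /\ edge_factor (L := L^c) v D N (to_conv_poly h) d f.
  apply: (edge_factor_left Hv HS Hc HD) => [|i|i];
    rewrite coef_to_conv_poly ?weight_to_conv_poly //; [exact: Hline | exact: Hstrict].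
exists (of_conv_poly g), (of_conv_poly f).
split; first by rewrite -(to_conv_polyK h) hE of_conv_polyM.
split; first by rewrite size_of_conv_poly.
- move=> i; rewrite {2}/weight !coef_of_conv_poly -(weight_to_conv_poly v D N h); exact: wf.
- move=> i le_id hi0 eqw; rewrite coef_of_conv_poly -(coef_to_conv_poly h i).
  by apply: onf; rewrite ?coef_to_conv_poly ?weight_to_conv_poly.
- move=> j hj0; rewrite coef_of_conv_poly; apply: lowf => k /hj0.
  by rewrite coef_to_conv_poly.
Qed.

(** * Newton polygons *)

Lemma sum_delta_mul n a (x : rat) (g : nat -> rat) : (a < n)%N ->
  \sum_(i < n) (if (i : nat) == a then x else 0) * g i = x * g a.
Proof.
move=> lt_an; rewrite (bigD1 (Ordinal lt_an)) //= eqxx big1 ?addr0 // => i neq_ia.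
by rewrite ifF ?mul0r //; apply/negbTE.
Qed.

Lemma convex_comb_ge n (c w : nat -> rat) lo : (forall i, 0 <= c i) ->
  \sum_(i < n) c i = 1 -> (forall i, (i < n)%N -> c i != 0 -> lo <= w i) ->
  lo <= \sum_(i < n) c i * w i.
Proof.
move=> c0 c1 h; rewrite -[lo]mul1r -c1 mulr_suml; apply: ler_sum => i _.
by have [->|ci0] := eqVneq (c i) 0; rewrite ?mul0r // ler_wpM2l ?h.
Qed.

Lemma convex_comb_le n (c w : nat -> rat) hi : (forall i, 0 <= c i) ->
  \sum_(i < n) c i = 1 -> (forall i, (i < n)%N -> c i != 0 -> w i <= hi) ->
  \sum_(i < n) c i * w i <= hi.
Proof.
move=> c0 c1 h; rewrite -lerN2 -sumrN (eq_bigr (fun i : 'I_n => c i * - w i)).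
  by apply: (convex_comb_ge (w := fun i => - w i)) => // i lt_in ci0; rewrite lerN2 h.
by move=> i _; rewrite mulrN.
Qed.

Lemma coef_neq0_lt_size (R : nzRingType) (p : {poly R}) i : p`_i != 0 -> (i < size p)%N.
Proof. by rewrite ltnNge; apply: contra => le_pi; rewrite nth_default. Qed.

Section NewtonGeometry.
Variables (L : unitRingType) (v : L -> int).

(* The linear form whose level sets are the lines of slope [N / D]; on the
   point [(i, v p_i)] it takes the value [weight v D N p i]. *)
Definition slope_form (D N : int) (p : rat * rat) := D%:~R * p.2 - N%:~R * p.1.

Lemma newton_hull_x_ge (F : {poly L}) p B : (forall i, F`_i != 0 -> (B <= i)%N) ->
  newton_hull v F p -> B%:R <= p.1.
Proof.
move=> hB [c [c0 cz c1 -> _]]; apply: convex_comb_ge => // i _ ci0.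
by rewrite ler_nat hB //; apply: contra ci0 => /eqP/cz ->.
Qed.

Lemma newton_hull_x_le (F : {poly L}) p B : (forall i, F`_i != 0 -> (i <= B)%N) ->
  newton_hull v F p -> p.1 <= B%:R.
Proof.
move=> hB [c [c0 cz c1 -> _]]; apply: convex_comb_le => // i _ ci0.
by rewrite ler_nat hB //; apply: contra ci0 => /eqP/cz ->.
Qed.

Lemma slope_form_hull (F : {poly L}) (c : nat -> rat) (D N : int) :
  slope_form D N (\sum_(i < size F) c i * i%:R, \sum_(i < size F) c i * (v F`_i)%:~R)
  = \sum_(i < size F) c i * (weight v D N F i)%:~R.
Proof.
rewrite /slope_form !mulr_sumr -sumrB; apply: eq_bigr => i _.
by rewrite /weight intrB !intrM /=; ring.
Qed.

Lemma newton_hull_form_ge (F : {poly L}) p (D N k : int) :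
  (forall i, F`_i != 0 -> k <= weight v D N F i) ->
  newton_hull v F p -> k%:~R <= slope_form D N p.
Proof.
move=> hk [c [c0 cz c1 e1 e2]]; rewrite (surjective_pairing p) e1 e2 slope_form_hull.
apply: (convex_comb_ge (w := fun i => (weight v D N F i)%:~R)) => // i _ ci0.
by rewrite ler_int hk //; apply: contra ci0 => /eqP/cz ->.
Qed.

(* A convex combination reaching the minimum of the form only charges points
   where the form is minimal, all of which lie left of [d]. *)
Lemma newton_hull_form_gt (F : {poly L}) p (D N k : int) (d : nat) :
  (forall i, F`_i != 0 -> k <= weight v D N F i) ->
  (forall i, (d < i)%N -> F`_i != 0 -> k < weight v D N F i) ->
  newton_hull v F p -> d%:R < p.1 -> k%:~R < slope_form D N p.
Proof.
move=> hk hks [c [c0 cz c1 e1 e2]] lt_dp.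
rewrite (surjective_pairing p) e1 e2 slope_form_hull.
rewrite ltNge; apply/negP => le_form.
pose W i := (weight v D N F i)%:~R : rat.
have ge_W i : c i != 0 -> k%:~R <= W i.
  by move=> ci0; rewrite ler_int hk //; apply: contra ci0 => /eqP/cz ->.
have dev_ge0 i : 0 <= c i * (W i - k%:~R).
  by have [->|ci0] := eqVneq (c i) 0; rewrite ?mul0r // mulr_ge0 // subr_ge0 ge_W.
have sum_dev : \sum_(i < size F) c i * (W i - k%:~R) = 0.
  apply/eqP; rewrite eq_le sumr_ge0 ?andbT => [|i _]; last exact: dev_ge0.
  rewrite (eq_bigr (fun i : 'I_(size F) => c i * W i - c i * k%:~R)) => [|i _].
    by rewrite sumrB -mulr_suml c1 mul1r subr_le0.
  by rewrite mulrBr.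
move: lt_dp; rewrite e1 ltNge => /negP; apply; apply: convex_comb_le => // i lt_iF ci0.
rewrite ler_nat leqNgt; apply/negP => lt_di.
have Fi0 : F`_i != 0 by apply: contra ci0 => /eqP/cz ->.
have := @psumr_eq0P _ _ xpredT (fun j : 'I_(size F) => c j * (W j - k%:~R))
  (fun j _ => dev_ge0 j) sum_dev (Ordinal lt_iF) isT.
move/eqP; rewrite mulf_eq0 (negbTE ci0) /= subr_eq0 eqr_int.
by rewrite gt_eqF // hks.
Qed.

Lemma newton_hull_segment (F : {poly L}) a b (mu : rat) :
  F`_a != 0 -> F`_b != 0 -> 0 <= mu <= 1 ->
  newton_hull v F (mu * a%:R + (1 - mu) * b%:R,
                   mu * (v F`_a)%:~R + (1 - mu) * (v F`_b)%:~R).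
Proof.
move=> Fa0 Fb0 /andP[mu0 mu1].
have [lt_aF lt_bF] := (coef_neq0_lt_size Fa0, coef_neq0_lt_size Fb0).
pose c i := (if i == a then mu else 0) + (if i == b then 1 - mu else 0).
have sum_c (g : nat -> rat) : \sum_(i < size F) c i * g i = mu * g a + (1 - mu) * g b.
  rewrite -(sum_delta_mul _ _ lt_aF) -(sum_delta_mul _ _ lt_bF) -big_split.
  by apply: eq_bigr => i _; rewrite mulrDl.
exists c; split => /=.
- by move=> i; rewrite addr_ge0 //; case: ifP; rewrite ?subr_ge0.
- move=> i Fi0; rewrite /c !ifF ?addr0 //; apply/negbTE/eqP => eq_i.
    by move: Fb0; rewrite -eq_i Fi0 eqxx.
  by move: Fa0; rewrite -eq_i Fi0 eqxx.
- have := sum_c (fun=> 1); rewrite !mulr1 addrC subrK => <-.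
  by apply: eq_bigr => i _; rewrite mulr1.
- by rewrite (sum_c (fun i => i%:R)).
- by rewrite (sum_c (fun i => (v F`_i)%:~R)).
Qed.

Section Edge.
Variables (F : {poly L}) (D N : int) (i0 d : nat).
Hypothesis HD : 0 < D.
Hypothesis lt_i0d : (i0 < d)%N.
Hypotheses (Fi00 : F`_i0 != 0) (Fd0 : F`_d != 0).
Hypothesis Hlow : forall i, F`_i != 0 -> (i0 <= i)%N.
Hypothesis Hi0d : weight v D N F i0 = weight v D N F d.
Hypothesis Hline : forall i, F`_i != 0 -> weight v D N F d <= weight v D N F i.

Lemma newton_hull_on_edge (x : rat) : i0%:R <= x -> x <= d%:R ->
  exists q, [/\ newton_hull v F q, q.1 = x & slope_form D N q = (weight v D N F d)%:~R].
Proof.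
move=> le_i0x le_xd.
have den0 : 0 < d%:R - i0%:R :> rat by rewrite subr_gt0 ltr_nat.
pose mu := (d%:R - x) / (d%:R - i0%:R).
have mu01 : 0 <= mu <= 1 by rewrite divr_ge0 ?ler_pdivrMr //=; lra.
exists (mu * i0%:R + (1 - mu) * d%:R, mu * (v F`_i0)%:~R + (1 - mu) * (v F`_d)%:~R).
split; first exact: newton_hull_segment.
  by rewrite /= /mu; field; rewrite lt0r_neq0.
have /(congr1 (fun z : int => z%:~R : rat)) := Hi0d.
rewrite /slope_form /weight !intrB !intrM /= => eqi0d.
transitivity (mu * (D%:~R * (v F`_i0)%:~R - N%:~R * i0%:R) +
              (1 - mu) * (D%:~R * (v F`_d)%:~R - N%:~R * d%:R)); first by ring.
by rewrite eqi0d; ring.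
Qed.

Lemma newton_polygon_edgeP p : p.1 <= d%:R ->
  newton_polygon v F p <-> i0%:R <= p.1 /\ slope_form D N p = (weight v D N F d)%:~R.
Proof.
have D0 : 0 < D%:~R :> rat by rewrite ltr0z.
have form_ge := newton_hull_form_ge Hline.
move=> le_pd; split=> [[hull_p low_p]|[le_i0p form_p]].
  have le_i0p := newton_hull_x_ge Hlow hull_p.
  have [q [hull_q q1 form_q]] := newton_hull_on_edge le_i0p le_pd.
  split=> //; apply/eqP; rewrite eq_le form_ge // andbT -form_q /slope_form q1.
  by rewrite lerD2r ler_pM2l // low_p.
have [q [hull_q q1 form_q]] := newton_hull_on_edge le_i0p le_pd.
have -> : p = q.
  move: form_q; rewrite -form_p /slope_form q1 => /addIr /(mulfI (lt0r_neq0 D0)).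
  by case: p q q1 {form_p le_i0p le_pd hull_q} => [x y] [x' y'] /= -> ->.
split=> // r hull_r r1; have := form_ge _ hull_r.
by rewrite -form_q /slope_form r1 lerD2r ler_pM2l.
Qed.

End Edge.
End NewtonGeometry.

Lemma ler_int_fracs (a b x y : int) : 0 < a -> 0 < b ->
  (x%:~R / a%:~R <= y%:~R / b%:~R :> rat) = (x * b <= y * a).
Proof.
move=> a0 b0; rewrite ler_pdivlMr ?ltr0z // mulrAC ler_pdivrMr ?ltr0z //.
by rewrite -!intrM ler_int.
Qed.

Lemma ltr_int_fracs (a b x y : int) : 0 < a -> 0 < b ->
  (x%:~R / a%:~R < y%:~R / b%:~R :> rat) = (x * b < y * a).
Proof.
move=> a0 b0; rewrite ltr_pdivlMr ?ltr0z // mulrAC ltr_pdivrMr ?ltr0z //.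
by rewrite -!intrM ltr_int.
Qed.

Section FirstEdge.
Variables (L : unitRingType) (v : L -> int) (h : {poly L}) (i0 : nat).
Hypothesis hi00 : h`_i0 != 0.
Hypothesis Hlow : forall i, h`_i != 0 -> (i0 <= i)%N.

(* The edge starting at [(i0, v h_i0)]: the line of least slope through that
   point, ending at the last point [ds] of [N_h] it contains. *)
Lemma min_slope_edge : (exists j, (i0 < j)%N && (h`_j != 0)) ->
  exists (ds : nat) (D N : int), [/\ 0 < D, (i0 < ds)%N, h`_ds != 0
    & weight v D N h i0 = weight v D N h ds] /\
    (forall i, h`_i != 0 -> weight v D N h ds <= weight v D N h i) /\
    (forall i, (ds < i)%N -> h`_i != 0 -> weight v D N h ds < weight v D N h i).
Proof.
move=> [j /andP[lt_i0j hj0]].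
pose P (i : 'I_(size h)) := (i0 < i)%N && (h`_i != 0).
pose s (i : 'I_(size h)) := (v h`_i - v h`_i0)%:~R / (i%:Z - i0%:Z)%:~R : rat.
have Pj : P (Ordinal (coef_neq0_lt_size hj0)) by rewrite /P lt_i0j.
case: (arg_minP s Pj) => m Pm min_m.
pose Q (i : 'I_(size h)) := P i && (s i == s m).
have Qm : Q m by rewrite /Q Pm eqxx.
case: (arg_maxnP (fun i : 'I_(size h) => i : nat) Qm).
move=> ds /andP[/andP[lt_i0ds hds0] /eqP s_ds] max_ds.
have D0 : 0 < ds%:Z - i0%:Z by rewrite subr_gt0 ltz_nat.
exists ds, (ds%:Z - i0%:Z), (v h`_ds - v h`_i0).
have eq_w : weight v (ds%:Z - i0%:Z) (v h`_ds - v h`_i0) h i0 =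
            weight v (ds%:Z - i0%:Z) (v h`_ds - v h`_i0) h ds by rewrite /weight; ring.
have slope_cmp i (hi0 : h`_i != 0) : (i0 < i)%N ->
    s ds <= s (Ordinal (coef_neq0_lt_size hi0)) /\
    ((ds < i)%N -> s ds < s (Ordinal (coef_neq0_lt_size hi0))).
  move=> lt_i0i; have Pi : P (Ordinal (coef_neq0_lt_size hi0)) by rewrite /P lt_i0i.
  rewrite s_ds; split; first exact: min_m.
  move=> lt_dsi; rewrite lt_neqAle min_m // andbT; apply: contraTneq lt_dsi => eq_s.
  rewrite -leqNgt; apply: (max_ds (Ordinal (coef_neq0_lt_size hi0))).
  by rewrite /Q Pi -eq_s eqxx.
split; first by [].
split=> [i hi0|i lt_dsi hi0]; rewrite -eq_w /weight.
  have [lt_i0i|] := ltnP i0 i; last first.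
    by rewrite leq_eqVlt ltnNge Hlow // orbF => /eqP ->.
  have [le_s _] := slope_cmp i hi0 lt_i0i.
  by move: le_s; rewrite /s /= ler_int_fracs ?subr_gt0 ?ltz_nat //; lia.
have [_ lt_s] := slope_cmp i hi0 (ltn_trans lt_i0ds lt_dsi).
by move: (lt_s lt_dsi); rewrite /s /= ltr_int_fracs ?subr_gt0 ?ltz_nat //; lia.
Qed.

End FirstEdge.

Lemma slope_form_comb (D N : int) (lam : rat) (q1 q2 : rat * rat) :
  slope_form D N (lam * q1.1 + (1 - lam) * q2.1, lam * q1.2 + (1 - lam) * q2.2) =
  lam * slope_form D N q1 + (1 - lam) * slope_form D N q2.
Proof. by rewrite /slope_form /=; ring. Qed.

Section EdgeBreakPoints.
Variables (L : unitRingType) (v : L -> int) (h : {poly L}) (D N : int) (i0 ds : nat).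
Hypothesis HD : 0 < D.
Hypothesis lt_i0ds : (i0 < ds)%N.
Hypotheses (hi00 : h`_i0 != 0) (hds0 : h`_ds != 0).
Hypothesis Hlow : forall i, h`_i != 0 -> (i0 <= i)%N.
Hypothesis Hi0ds : weight v D N h i0 = weight v D N h ds.
Hypothesis Hline : forall i, h`_i != 0 -> weight v D N h ds <= weight v D N h i.
Hypothesis Hstrict :
  forall i, (ds < i)%N -> h`_i != 0 -> weight v D N h ds < weight v D N h i.

Local Notation edgeP := (newton_polygon_edgeP HD lt_i0ds hi00 hds0 Hlow Hi0ds Hline).
Local Notation P0 := (i0%:R, (v h`_i0)%:~R).
Local Notation P1 := (ds%:R, (v h`_ds)%:~R).

Lemma slope_form_coef i : slope_form D N (i%:R, (v h`_i)%:~R) = (weight v D N h i)%:~R.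
Proof. by rewrite /slope_form /weight /= intrB !intrM. Qed.

Lemma newton_polygon_edge_start : newton_polygon v h P0.
Proof. by apply/edgeP; rewrite /= ?ler_nat ?(ltnW lt_i0ds) // slope_form_coef Hi0ds. Qed.

Lemma newton_polygon_edge_end : newton_polygon v h P1.
Proof. by apply/edgeP; rewrite /= ?ler_nat ?(ltnW lt_i0ds) // slope_form_coef. Qed.

Lemma edge_interior_not_break_point (d : nat) (e : rat) :
  (i0 < d < ds)%N -> newton_polygon v h (d%:R, e) -> ~ break_point v h (d%:R, e).
Proof.
move=> /andP[lt_i0d lt_dds] NPd [_ _ _]; apply.
have le_dds : (d%:R, e).1 <= ds%:R :> rat by rewrite /= ler_nat ltnW.
have [_ form_d] := (edgeP le_dds).1 NPd.
have den0 : 0 < ds%:R - i0%:R :> rat by rewrite subr_gt0 ltr_nat.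
pose lam : rat := (ds%:R - d%:R) / (ds%:R - i0%:R).
have lam01 : 0 < lam < 1.
  by rewrite divr_gt0 ?ltr_pdivrMr ?subr_gt0 ?ltr_nat //= mul1r ltrD2l ltrN2 ltr_nat.
have x_d : lam * i0%:R + (1 - lam) * ds%:R = d%:R :> rat.
  by rewrite /lam; field; rewrite lt0r_neq0.
exists P0, P1, lam; split; rewrite /= ?ltr_nat ?lt_i0d ?lt_dds //.
- exact: newton_polygon_edge_start.
- exact: newton_polygon_edge_end.
have := slope_form_comb D N lam P0 P1.
rewrite !slope_form_coef Hi0ds -mulrDl [lam + _]addrC subrK mul1r x_d -form_d.
have D0 : D%:~R != 0 :> rat by rewrite intr_eq0 gt_eqF.
by rewrite /slope_form /= => /addIr /(mulfI D0) ->.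
Qed.

Lemma edge_end_break_point q : newton_polygon v h q -> ds%:R < q.1 ->
  break_point v h P1.
Proof.
move=> NPq lt_dsq; split.
- exact: newton_polygon_edge_end.
- by exists P0; split; [exact: newton_polygon_edge_start | rewrite ltr_nat].
- by exists q.
case=> q1 [q2 [lam [NP1 NP2 /andP[_ lt_q2] /andP[lam0 lam1] eqP1]]].
have ge1 := newton_hull_form_ge Hline NP1.1.
have gt2 := newton_hull_form_gt Hline Hstrict NP2.1 lt_q2.
have := slope_form_comb D N lam q1 q2; rewrite -eqP1 slope_form_coef.
by move: ge1 gt2; nra.
Qed.

End EdgeBreakPoints.

Lemma first_break_point_edge (L : unitRingType) (v : L -> int) (h : {poly L})
    (d : nat) (e : rat) :
  break_point v h (d%:R, e) -> (forall q, break_point v h q -> d%:R <= q.1) ->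
  exists (i0 : nat) (D N : int), [/\ 0 < D, (i0 < d)%N, h`_i0 != 0 & h`_d != 0] /\
    [/\ forall i, h`_i != 0 -> (i0 <= i)%N,
        weight v D N h i0 = weight v D N h d,
        forall i, h`_i != 0 -> weight v D N h d <= weight v D N h i
      & forall i, (d < i)%N -> h`_i != 0 -> weight v D N h d < weight v D N h i].
Proof.
move=> Hbreak Hfirst; have [NPd [ql [NPl lt_ld]] _ _] := Hbreak.
have h_neq0 : exists i, h`_i != 0.
  exists (size h).-1; rewrite -/(lead_coef h) lead_coef_eq0 -size_poly_eq0.
  case: NPd => -[c [_ _ c1 _ _]] _; move: c1.
  by case: (size h) => // /eqP; rewrite big_ord0 eq_sym oner_eq0.
have [i0 hi00 min_i0] := ex_minnP h_neq0.
have Hlow i : h`_i != 0 -> (i0 <= i)%N by apply: min_i0.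
have lt_i0d : (i0 < d)%N.
  by rewrite -(ltr_nat rat) (le_lt_trans (newton_hull_x_ge Hlow NPl.1) lt_ld).
have right_i0 : exists j, (i0 < j)%N && (h`_j != 0).
  have [/existsP [j hj]|/existsPn none] :=
    boolP [exists j : 'I_(size h), (i0 < j)%N && (h`_j != 0)]; first by exists j.
  suff : (d <= i0)%N by rewrite leqNgt lt_i0d.
  rewrite -(ler_nat rat); apply: newton_hull_x_le NPd.1 => i hi0.
  by have := none (Ordinal (coef_neq0_lt_size hi0)); rewrite /= hi0 andbT -leqNgt.
have [ds [D [N [[HD lt_i0ds hds0 Hi0ds] [Hline Hstrict]]]]] :=
  min_slope_edge v hi00 Hlow right_i0.
have [lt_dds|lt_dsd|->] := ltngtP d ds.
- have := edge_interior_not_break_point HD lt_i0ds hi00 hds0 Hlow Hi0ds Hline (d := d) (e := e).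
  by rewrite lt_i0d lt_dds => /(_ isT NPd).
- have : (d%:R : rat) <= ds%:R.
    apply: Hfirst (edge_end_break_point HD lt_i0ds hi00 hds0 Hlow Hi0ds Hline Hstrict NPd _).
    by rewrite /= ltr_nat.
  by rewrite ler_nat leqNgt lt_dsd.
by exists i0, D, N.
Qed.

Lemma newton_polygon_edge_factor (L : unitRingType) (v : L -> int) (D N : int)
    (h f : {poly L}) (i0 d : nat) :
  0 < D -> (i0 < d)%N -> h`_i0 != 0 -> h`_d != 0 ->
  (forall i, h`_i != 0 -> (i0 <= i)%N) ->
  weight v D N h i0 = weight v D N h d ->
  (forall i, h`_i != 0 -> weight v D N h d <= weight v D N h i) ->
  edge_factor v D N h d f ->
  forall p, newton_polygon v f p <-> newton_polygon v h p /\ p.1 <= d%:R.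
Proof.
move=> HD lt_i0d hi00 hd0 Hlow Hi0d Hline [sf wf onf lowf].
have [fi00 vfi0] := onf i0 (ltnW lt_i0d) hi00 Hi0d.
have [fd0 vfd] := onf d (leqnn d) hd0 erefl.
have wfd : weight v D N f d = weight v D N h d by rewrite /weight vfd.
have wfi0 : weight v D N f i0 = weight v D N h i0 by rewrite /weight vfi0.
have Hlow_f i : f`_i != 0 -> (i0 <= i)%N.
  rewrite leqNgt; apply: contra => lt_ii0; apply/eqP/lowf => k le_ki.
  by apply/eqP; apply: contraTT lt_ii0 => /Hlow le_i0k; rewrite -leqNgt (leq_trans le_i0k).
have edge_h := newton_polygon_edgeP HD lt_i0d hi00 hd0 Hlow Hi0d Hline.
have Hline_f i : f`_i != 0 -> weight v D N f d <= weight v D N f i.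
  by rewrite wfd; apply: wf.
have Hi0d_f : weight v D N f i0 = weight v D N f d by rewrite wfi0 wfd.
have edge_f := newton_polygon_edgeP HD lt_i0d fi00 fd0 Hlow_f Hi0d_f Hline_f.
move=> p; split=> [NPf|[NPh le_pd]].
  have le_pd : p.1 <= d%:R.
    by apply: newton_hull_x_le NPf.1 => i /coef_neq0_lt_size; rewrite sf.
  by split=> //; apply/(edge_h _ le_pd); rewrite -wfd; apply/(edge_f _ le_pd).
by apply/(edge_f _ le_pd); rewrite wfd; apply/(edge_h _ le_pd).
Qed.

Theorem proposition2p7 (L : unitRingType) (v : L -> int)
  (HL : complete_dv_skew_field v) (h : {poly L}) (d : nat) (e : rat)
  (Hbreak : break_point v h (d%:R, e))
  (Hfirst : forall q, break_point v h q -> d%:R <= q.1) :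
  (exists f g : {poly L},
     [/\ (size f).-1 = d,
         (forall p, newton_polygon v f p <-> newton_polygon v h p /\ p.1 <= d%:R)
       & h = f * g]) /\
  (exists f g : {poly L},
     [/\ (size f).-1 = d,
         (forall p, newton_polygon v f p <-> newton_polygon v h p /\ p.1 <= d%:R)
       & h = g * f]).
Proof.
have [i0 [D [N [[HD lt_i0d hi00 hd0] [Hlow Hi0d Hline Hstrict]]]]] :=
  first_break_point_edge Hbreak Hfirst.
have NP_factor f := newton_polygon_edge_factor (f := f) HD lt_i0d hi00 hd0 Hlow Hi0d Hline.
have [HS Hv Hc] := HL.
split.
  have [g [f [hE ef]]] := edge_factor_right HL HD hd0 Hline Hstrict.
  by exists f, g; split=> //; [case: ef => -> | exact: NP_factor].
have [g [f [hE ef]]] := edge_factor_left Hv HS Hc HD hd0 Hline Hstrict.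
by exists f, g; split=> //; [case: ef => -> | exact: NP_factor].
Qed.
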